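(* Let $I$ be a general ring and $a\in I$. The following are equivalent: (1) $a$ is strongly $\pi$-regular in $I$; (2) there exists an idempotent $p=p^2\in\mathrm{comm}^2(a)$ such that $a-ap\in \mathrm{Nil}(I)$ and $a+p\in Q(I)$; (3) there exists an idempotent $p=p^2\in\mathrm{comm}(a)$ such that $a-ap\in\mathrm{Nil}(I)$ and $a+p\in Q(I)$; (4) there exists $b\in\mathrm{comm}^2(a)$ such that $ab^2=b$ and $a^2b-a\in\mathrm{Nil}(I)$; (5) there exists $b\in\mathrm{comm}(a)$ such that $ab^2=b$ and $a^2b-a\in\mathrm{Nil}(I)$.
   Context: A general ring is an associative ring not necessarily having an identity. $\mathrm{Nil}(I)$ is the set of nilpotent elements of $I$. For $p,q\in I$, $p*q=p+q-pq$; $Q(I)=\{q\in I\mid p*q=0=q*p \text{ for some } p\in I\}$; $\mathrm{comm}(a)=\{x\in I\mid xa=ax\}$, $\mathrm{comm}^2(a)=\{x\in I\mid xy=yx\text{ for all }y\in\mathrm{comm}(a)\}$. An element $a\in I$ is strongly $\pi$-regular if there exist $n\in\mathbb{N}$ and $x\in\mathrm{comm}(a)$ with $a^n=a^{n+1}x$. *)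

From HB Require Import structures.
From mathcomp Require Import all_boot all_order all_algebra.
Set Implicit Arguments. Unset Strict Implicit. Unset Printing Implicit Defensive.
Import GRing.Theory.
Local Open Scope ring_scope.

(* A general ring: an abelian group with an associative, biadditive product;
   no identity element is assumed. *)
HB.mixin Record Zmodule_isRng V of GRing.Zmodule V := {
  rmul : V -> V -> V;
  rmulA : forall x y z, rmul x (rmul y z) = rmul (rmul x y) z;
  rmulDl : forall x y z, rmul (x + y) z = rmul x z + rmul y z;
  rmulDr : forall x y z, rmul x (y + z) = rmul x y + rmul x z
}.

#[short(type="rngType")]
HB.structure Definition Rng := { V of GRing.Zmodule V & Zmodule_isRng V }.

Section RngDefs.
Variable I : rngType.

(* rpowS x n = x^(n+1)  (positive powers only, no identity available) *)
Definition rpowS (x : I) (n : nat) : I := iter n (rmul x) x.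

Definition nilpotent (x : I) : Prop := exists n : nat, rpowS x n = 0.

Definition circ (p q : I) : I := p + q - rmul p q.

Definition quasireg (q : I) : Prop := exists p : I, circ p q = 0 /\ circ q p = 0.

Definition comm1 (a x : I) : Prop := rmul x a = rmul a x.
Definition comm2 (a x : I) : Prop := forall y : I, comm1 a y -> rmul x y = rmul y x.

(* a is strongly pi-regular: a^n = a^(n+1) x for some n >= 1, x in comm(a).
   Written with n = m+1: a^(m+1) = a^(m+2) x. *)
Definition strongly_pi_regular (a : I) : Prop :=
  exists (m : nat) (x : I), comm1 a x /\ rpowS a m = rmul (rpowS a m.+1) x.

Definition is_idem (p : I) : Prop := rmul p p = p.
End RngDefs.

(* Everything is organised around a "Drazin triple" (a, b, p): an idempotent
   p and an element b with ab = ba = p, pb = b, and a - ap nilpotent.  Such a b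
   is the Drazin inverse of a and p = ab its spectral idempotent.

   - Generic facts: arithmetic of the product without a unit, positive
     powers, annihilation by nilpotents, and the circle operation
     x o y = x + y - xy, which is associative with neutral element 0, so
     quasi-regular elements form a group; nilpotents are quasi-regular.
   - For an idempotent p commuting with a, with w = a - ap, we have
     a^n - a^n p = w^n and a + p = w o (ap + p).
   - A Drazin triple gives: strong pi-regularity (a^n = a^(n+1) b); b and p
     lie in comm^2(a) (a corner of the ring on which a acts nilpotently
     must vanish); a + p is quasi-regular as a circle product of w and
     ap + p, whose quasi-inverse is p + b.
   - Conversely a Drazin triple is built from each of (1), (3) and (5):
     from a^n = a^(n+1) x take p = (ax)^n and b = px; from a quasi-inverse
     y of a + p take b = py - p; from (5) take p = ab. *)

From HB Require Import structures.
From mathcomp Require Import all_boot all_order all_algebra.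
Import GRing.Theory.
Set Implicit Arguments.
Unset Strict Implicit.
Unset Printing Implicit Defensive.
Local Open Scope ring_scope.

Local Notation "x ⋆ y" := (rmul x y) (at level 40, left associativity).

Section GeneralRing.
Variable I : rngType.
Implicit Types (a b c e p u w x y z : I).

Lemma rmul0r x : 0 ⋆ x = 0.
Proof. by apply: (addrI (0 ⋆ x)); rewrite -rmulDl !addr0. Qed.

Lemma rmulr0 x : x ⋆ 0 = 0.
Proof. by apply: (addrI (x ⋆ 0)); rewrite -rmulDr !addr0. Qed.

Lemma rmulNr x y : (- x) ⋆ y = - (x ⋆ y).
Proof. by apply: (addrI (x ⋆ y)); rewrite -rmulDl !subrr rmul0r. Qed.

Lemma rmulrN x y : x ⋆ (- y) = - (x ⋆ y).
Proof. by apply: (addrI (x ⋆ y)); rewrite -rmulDr !subrr rmulr0. Qed.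

Lemma rmulBl x y z : (x - y) ⋆ z = x ⋆ z - y ⋆ z.
Proof. by rewrite rmulDl rmulNr. Qed.

Lemma rmulBr x y z : z ⋆ (x - y) = z ⋆ x - z ⋆ y.
Proof. by rewrite rmulDr rmulrN. Qed.

Lemma rpowSS x n : rpowS x n.+1 = x ⋆ rpowS x n.
Proof. by []. Qed.

Lemma rpowSr x n : rpowS x n.+1 = rpowS x n ⋆ x.
Proof. by elim: n => [//|n IH]; rewrite rpowSS {1}IH rmulA. Qed.

Lemma rpow_comm x y n : y ⋆ x = x ⋆ y -> y ⋆ rpowS x n = rpowS x n ⋆ y.
Proof.
by move=> yx; elim: n => [//|n IH]; rewrite rpowSS rmulA yx -rmulA IH rmulA.
Qed.

Lemma rpowM x y n : x ⋆ y = y ⋆ x -> rpowS (x ⋆ y) n = rpowS x n ⋆ rpowS y n.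
Proof.
move=> xy; elim: n => [//|n IH].
rewrite rpowSS IH !rpowSS -!rmulA; congr (x ⋆ _).
by rewrite !rmulA (rpow_comm _ (esym xy)).
Qed.

Lemma rpow_fixr c e n : c ⋆ e = c -> c ⋆ rpowS e n = c.
Proof. by move=> ce; elim: n => [//|n IH]; rewrite rpowSS rmulA ce. Qed.

Lemma rpow_annihl c w n : c ⋆ w = 0 -> c ⋆ rpowS w n = 0.
Proof. by move=> cw; case: n => [//|n]; rewrite rpowSS rmulA cw rmul0r. Qed.

Lemma rpowN x n : rpowS (- x) n = if odd n then rpowS x n else - rpowS x n.
Proof.
elim: n => [//|n IH]; rewrite rpowSS IH /= ?rpowSS rmulNr.
by case: (odd n) => /=; rewrite ?rmulrN ?opprK.
Qed.

Lemma nilpotentN x : nilpotent (- x) -> nilpotent x.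
Proof.
move=> [n xn0]; exists n; move: xn0; rewrite rpowN.
by case: (odd n) => // /eqP; rewrite oppr_eq0 => /eqP.
Qed.

(* An element reproduced by multiplication with a nilpotent w (on the
   right, resp. left) is zero: iterating gives z = d (z w^k) = 0. *)
Lemma absorb_nil_l z c w : nilpotent w -> z = c ⋆ (z ⋆ w) -> z = 0.
Proof.
move=> [k wk0] zE.
have zEk j : exists d, z = d ⋆ (z ⋆ rpowS w j).
  elim: j => [|j [d dE]]; first by exists c.
  by exists (d ⋆ c); rewrite {1}dE {1}zE rpowSS !rmulA.
by have [d ->] := zEk k; rewrite wk0 !rmulr0.
Qed.

Lemma absorb_nil_r z c w : nilpotent w -> z = (w ⋆ z) ⋆ c -> z = 0.
Proof.
move=> [k wk0] zE.
have zEk j : exists d, z = (rpowS w j ⋆ z) ⋆ d.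
  elim: j => [|j [d dE]]; first by exists c.
  by exists (c ⋆ d); rewrite {1}dE {1}zE rpowSr !rmulA.
by have [d ->] := zEk k; rewrite wk0 !rmul0r.
Qed.

Lemma comm1M a u v : comm1 a u -> comm1 a v -> comm1 a (u ⋆ v).
Proof. by rewrite /comm1 => ua va; rewrite -rmulA va rmulA ua -rmulA. Qed.

Lemma comm1B a u v : comm1 a u -> comm1 a v -> comm1 a (u - v).
Proof. by rewrite /comm1 => ua va; rewrite rmulBl rmulBr ua va. Qed.

Lemma comm2_comm1 a x : comm2 a x -> comm1 a x.
Proof. by move=> xc; apply: xc. Qed.

Lemma circ_eq0 x y : circ x y = 0 <-> x ⋆ y = x + y.
Proof.
rewrite /circ; split=> [/eqP|->]; last exact: subrr.
by rewrite subr_eq0 => /eqP.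
Qed.

Lemma circ0l x : circ 0 x = x.
Proof. by rewrite /circ rmul0r add0r subr0. Qed.

Lemma circA x y z : circ x (circ y z) = circ (circ x y) z.
Proof.
rewrite /circ !(rmulDl, rmulDr, rmulBl, rmulBr) !rmulA !opprD !opprK !addrA.
by rewrite [LHS](ACl (1*2*5*3*6*4*7)).
Qed.

Lemma quasireg_circ x y : quasireg x -> quasireg y -> quasireg (circ x y).
Proof.
move=> [x' [x'x xx']] [y' [y'y yy']]; exists (circ y' x'); split.
- by rewrite circA -(circA y') x'x -circA circ0l.
- by rewrite circA -(circA x) yy' -circA circ0l.
Qed.

(* geom w k = w + w^2 + ... + w^(k+1); its negative is a quasi-inverse
   of w when w^(k+1) = 0. *)
Fixpoint geom w k : I := if k is k'.+1 then w + w ⋆ geom w k' else w.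

Lemma geom_comm w k : geom w k ⋆ w = w ⋆ geom w k.
Proof. by elim: k => [//|k IH] /=; rewrite rmulDl rmulDr -rmulA IH. Qed.

Lemma geom_step w k : w ⋆ geom w k + w = geom w k + rpowS w k.+1.
Proof.
elim: k => [|k IH]; first by rewrite addrC.
rewrite /= -addrA -rmulDr -IH !rmulDr.
by rewrite addrC (addrC (w ⋆ w)).
Qed.

Lemma nilpotent_quasireg w : nilpotent w -> quasireg w.
Proof.
move=> [k wk0]; set s := geom w k.
have ws : w ⋆ s = s - w.
  by apply: (addIr w); rewrite geom_step rpowSS wk0 rmulr0 addr0 subrK.
exists (- s); split; rewrite /circ ?rmulNr ?rmulrN opprK ?geom_comm ws.
- by rewrite -opprB (addrC (- s)) subrr.
- by rewrite -opprB addNr.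
Qed.

(* The quasi-inverse y of x commutes with everything commuting with x
   (in the unitization, 1 - y is the inverse of 1 - x). *)
Lemma quasi_inverse_comm x y c : circ y x = 0 -> circ x y = 0 ->
  c ⋆ x = x ⋆ c -> c ⋆ y = y ⋆ c.
Proof.
move=> /circ_eq0 yx /circ_eq0 xy cx.
have cyE : c ⋆ y = x ⋆ c ⋆ y - x ⋆ c.
  by rewrite -cx -rmulA -rmulBr xy addrC addKr.
have xcy : x ⋆ c ⋆ y = y ⋆ c + x ⋆ c.
  have := congr1 (rmul y) cyE; rewrite rmulBr !rmulA yx !rmulDl -addrA.
  rewrite -{1}[y ⋆ c ⋆ y]addr0 => /addrI/esym/eqP.
  by rewrite subr_eq0 => /eqP.
by rewrite cyE xcy addrK.
Qed.

Section IdempotentCorner.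
Variables a p : I.
Hypotheses (pp : p ⋆ p = p) (pa : p ⋆ a = a ⋆ p).

Lemma corner_p_w : p ⋆ (a - a ⋆ p) = 0.
Proof. by rewrite rmulBr rmulA pa -rmulA pp subrr. Qed.

Lemma corner_w_p : (a - a ⋆ p) ⋆ p = 0.
Proof. by rewrite rmulBl -rmulA pp subrr. Qed.

Lemma corner_pow n : rpowS a n - rpowS a n ⋆ p = rpowS (a - a ⋆ p) n.
Proof.
elim: n => [//|n IH].
rewrite rpowSS -rmulA -rmulBr IH [RHS]rpowSS rmulBl -rmulA.
by rewrite (rpow_annihl _ corner_p_w) rmulr0 subr0.
Qed.

Lemma corner_nilpotent :
  nilpotent (a - a ⋆ p) <-> exists n, rpowS a n = rpowS a n ⋆ p.
Proof.
split=> -[n an]; exists n; first by apply/eqP; rewrite -subr_eq0 corner_pow an.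
by rewrite -corner_pow -an subrr.
Qed.

Lemma corner_circ : a + p = circ (a - a ⋆ p) (a ⋆ p + p).
Proof.
have w_ap : (a - a ⋆ p) ⋆ (a ⋆ p) = 0.
  by rewrite -{2}pa rmulA corner_w_p rmul0r.
by rewrite /circ rmulDr w_ap corner_w_p add0r subr0 addrA subrK.
Qed.

End IdempotentCorner.

Definition drazin_triple a b p : Prop :=
  [/\ p ⋆ p = p, a ⋆ b = p, b ⋆ a = p, p ⋆ b = b & nilpotent (a - a ⋆ p)].

Section DrazinTriple.
Variables a b p : I.
Hypothesis T : drazin_triple a b p.

Lemma triple_idem : p ⋆ p = p. Proof. by case: T. Qed.
Lemma triple_ab : a ⋆ b = p. Proof. by case: T. Qed.
Lemma triple_ba : b ⋆ a = p. Proof. by case: T. Qed.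
Lemma triple_pb : p ⋆ b = b. Proof. by case: T. Qed.
Lemma triple_nil : nilpotent (a - a ⋆ p). Proof. by case: T. Qed.

Lemma triple_pa : p ⋆ a = a ⋆ p.
Proof. by rewrite -{1}triple_ab -rmulA triple_ba. Qed.

Lemma triple_bp : b ⋆ p = b.
Proof. by rewrite -triple_ab rmulA triple_ba triple_pb. Qed.

Lemma triple_spr : strongly_pi_regular a.
Proof.
have [n an] := (corner_nilpotent triple_idem triple_pa).1 triple_nil.
exists n, b; split; first by rewrite /comm1 triple_ab triple_ba.
by rewrite rpowSr -rmulA triple_ab.
Qed.

Lemma triple_inverse : a ⋆ (b ⋆ b) = b /\ nilpotent (a ⋆ a ⋆ b - a).
Proof.
split; first by rewrite rmulA triple_ab triple_pb.
apply: nilpotentN; rewrite opprB -rmulA triple_ab; exact: triple_nil.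
Qed.

(* An element of comm(a) in the corner pI(1-p) (resp. (1-p)Ip) vanishes,
   since a acts on it through the nilpotent w and is inverted by b. *)
Lemma triple_corner_l z : z ⋆ a = a ⋆ z -> p ⋆ z = z -> z ⋆ p = 0 -> z = 0.
Proof.
move=> za pz zp; apply: (absorb_nil_l (c := b) triple_nil).
by rewrite rmulBr -triple_pa rmulA zp rmul0r subr0 za rmulA triple_ba pz.
Qed.

Lemma triple_corner_r z : z ⋆ a = a ⋆ z -> z ⋆ p = z -> p ⋆ z = 0 -> z = 0.
Proof.
move=> za zp pz; apply: (absorb_nil_r (c := b) triple_nil).
by rewrite rmulBl -rmulA pz rmulr0 subr0 -za -rmulA triple_ab zp.
Qed.


(* p is in comm^2(a): for y in comm(a), both py - pyp and yp - pyp are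
   corner elements commuting with a, hence zero. *)
Lemma triple_idem_comm2 : comm2 a p.
Proof.
move=> y ya; have pa : comm1 a p := triple_pa.
have pyp_l : p ⋆ y - p ⋆ y ⋆ p = 0.
  apply: triple_corner_l.
  - exact: comm1B (comm1M pa ya) (comm1M (comm1M pa ya) pa).
  - by rewrite rmulBr !rmulA triple_idem.
  - by rewrite rmulBl -!rmulA triple_idem subrr.
have pyp_r : y ⋆ p - p ⋆ y ⋆ p = 0.
  apply: triple_corner_r.
  - exact: comm1B (comm1M ya pa) (comm1M (comm1M pa ya) pa).
  - by rewrite rmulBl -!rmulA triple_idem.
  - by rewrite rmulBr !rmulA triple_idem subrr.
by rewrite (subr0_eq pyp_l) -(subr0_eq pyp_r).
Qed.

(* b is in comm^2(a): for y in comm(a), using py = yp,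
   by = b(py) = b(y ab) = (ba)(yb) = (py)b = y(pb) = yb. *)
Lemma triple_inv_comm2 : comm2 a b.
Proof.
move=> y ya; have py := triple_idem_comm2 ya.
rewrite -{1}triple_bp -rmulA py -{1}triple_ab (rmulA y) ya -(rmulA a).
by rewrite rmulA triple_ba rmulA py -rmulA triple_pb.
Qed.

(* a + p = w o (ap + p), with w nilpotent and p + b quasi-inverse to ap + p. *)
Lemma triple_quasireg : quasireg (a + p).
Proof.
rewrite (corner_circ triple_idem triple_pa); apply: quasireg_circ.
  exact: nilpotent_quasireg triple_nil.
exists (p + b); split; apply/circ_eq0.
- rewrite !rmulDl !rmulDr !rmulA triple_pa -rmulA triple_idem triple_ba.
  by rewrite triple_idem triple_bp addrC.
- by rewrite !rmulDl !rmulDr -!rmulA triple_idem triple_pb triple_ab.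
Qed.

End DrazinTriple.

Lemma triple_of_inverse a b : comm1 a b -> a ⋆ (b ⋆ b) = b ->
  nilpotent (a ⋆ a ⋆ b - a) -> drazin_triple a b (a ⋆ b).
Proof.
move=> ba abb nil; split=> //; last by apply: nilpotentN; rewrite opprB rmulA.
- by rewrite -rmulA (rmulA b a b) ba -rmulA abb.
- by rewrite -rmulA.
Qed.

(* (1) gives a Drazin triple: from a^n = a^(n+1) x with x in comm(a), the
   idempotent is p = (ax)^n and the inverse is b = px. *)
Lemma triple_of_spr a : strongly_pi_regular a -> exists b p, drazin_triple a b p.
Proof.
move=> [m [x [xa am]]]; set e := a ⋆ x.
have ame : rpowS a m ⋆ e = rpowS a m by rewrite /e rmulA -rpowSr -am.
have xe : x ⋆ e = e ⋆ x by rewrite /e rmulA xa.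
have ea : e ⋆ a = a ⋆ e by rewrite /e -rmulA xa.
set p := rpowS e m.
have pE : p = rpowS a m ⋆ rpowS x m := rpowM m (esym xa).
have pe : p ⋆ e = p by rewrite pE -rmulA -(rpow_comm m (esym xe)) rmulA ame.
have pp : p ⋆ p = p := rpow_fixr m pe.
have pa : p ⋆ a = a ⋆ p := esym (rpow_comm m (esym ea)).
exists (p ⋆ x), p; split=> //.
- by rewrite rmulA -pa -rmulA pe.
- by rewrite -rmulA xa pe.
- by rewrite rmulA pp.
- by apply/(corner_nilpotent pp pa); exists m; rewrite (rpow_fixr m ame).
Qed.

(* (3) gives a Drazin triple: if y is the quasi-inverse of a + p then
   b = py - p satisfies ba = p. *)
Lemma triple_of_quasireg a p : p ⋆ p = p -> p ⋆ a = a ⋆ p ->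
  nilpotent (a - a ⋆ p) -> quasireg (a + p) -> exists b, drazin_triple a b p.
Proof.
move=> pp pa nil [y [yq qy]].
have ya : a ⋆ y = y ⋆ a.
  by apply: (quasi_inverse_comm yq qy); rewrite rmulDr rmulDl pa.
have pya : p ⋆ y ⋆ a = p ⋆ a + p.
  have := congr1 (rmul p) ((circ_eq0 _ _).1 qy).
  rewrite !rmulA !rmulDr rmulDl pp => /addIr <-.
  by rewrite -rmulA -ya rmulA.
exists (p ⋆ y - p); split=> //.
- rewrite rmulBr rmulA -pa -rmulA ya rmulA pya pa.
  by rewrite addrAC subrr add0r.
- by rewrite rmulBl pya pa addrAC subrr add0r.
- by rewrite rmulBr rmulA pp.
Qed.
End GeneralRing.

Theorem theorem2p10 (I : rngType) (a : I) :
  [<-> strongly_pi_regular a;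
       exists p : I, [/\ is_idem p, comm2 a p,
                         nilpotent (a - rmul a p) & quasireg (a + p)];
       exists p : I, [/\ is_idem p, comm1 a p,
                         nilpotent (a - rmul a p) & quasireg (a + p)];
       exists b : I, [/\ comm2 a b, rmul a (rmul b b) = b
                       & nilpotent (rmul (rmul a a) b - a)];
       exists b : I, [/\ comm1 a b, rmul a (rmul b b) = b
                       & nilpotent (rmul (rmul a a) b - a)]].
Proof.
tfae.
- move=> /triple_of_spr [b [p T]]; exists p; split.
  + exact: triple_idem T.
  + exact: triple_idem_comm2 T.
  + exact: triple_nil T.
  + exact: triple_quasireg T.
- by move=> [p [pp pa nil q]]; exists p; split=> //; apply: comm2_comm1.
- move=> [p [pp pa nil q]]; have [b T] := triple_of_quasireg pp pa nil q.
  have [abb nil_b] := triple_inverse T.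
  by exists b; split=> //; apply: triple_inv_comm2 T.
- by move=> [b [bc abb nil]]; exists b; split=> //; apply: comm2_comm1.
- by move=> [b [ba abb nil]]; apply: triple_spr (triple_of_inverse ba abb nil).
Qed.
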